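(* For every integer $F\ge6$, $$s(F,F,2)=3F-8+s(F-3,F-3,2).$$ (In particular, with $s(3,3,2)=1$, $s(4,4,2)=4$, $s(5,5,2)=7$, this determines $s(F,F,2)$ for all $F\ge3$.)
   Context: A placement delivery array $S$-PDA$(F,K,Z)$ is an $F\times K$ array $R=(r_{j,k})$, $1\le j\le F$, $1\le k\le K$, over a finite set $S$ such that: (1) each cell is either empty or contains an element of $S$; (2) each column contains exactly $Z$ empty cells; (3) each element of $S$ occurs at most once in each row and at most once in each column; (4) if two distinct nonempty cells satisfy $r_{j_1,k_1}=r_{j_2,k_2}=t\in S$, then the cells $r_{j_1,k_2}$ and $r_{j_2,k_1}$ are empty. For integers $F,K\ge1$, $0\le Z\le F$, define $s(F,K,Z)=\min\{|S| : \text{there exists an } S\text{-PDA}(F,K,Z)\}$. *)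

From mathcomp Require Import all_boot.
Set Implicit Arguments. Unset Strict Implicit. Unset Printing Implicit Defensive.

(* An F x K array over a finite symbol set S: each cell is None (empty)
   or Some t with t in S. *)
Definition is_PDA (F K Z : nat) (S : finType) (R : 'I_F -> 'I_K -> option S) : Prop :=
  (forall k : 'I_K, #|[set j : 'I_F | R j k == None]| = Z) /\
  (forall (j : 'I_F) (k1 k2 : 'I_K) (t : S),
      R j k1 = Some t -> R j k2 = Some t -> k1 = k2) /\
  (forall (j1 j2 : 'I_F) (k : 'I_K) (t : S),
      R j1 k = Some t -> R j2 k = Some t -> j1 = j2) /\
  (forall (j1 j2 : 'I_F) (k1 k2 : 'I_K) (t : S),
      (j1, k1) <> (j2, k2) -> R j1 k1 = Some t -> R j2 k2 = Some t ->
      R j1 k2 = None /\ R j2 k1 = None).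

Definition PDA_exists (F K Z : nat) (S : finType) : Prop :=
  exists R : 'I_F -> 'I_K -> option S, is_PDA Z R.

Definition is_s (F K Z n : nat) : Prop :=
  (exists S : finType, #|S| = n /\ PDA_exists F K Z S) /\
  (forall S : finType, PDA_exists F K Z S -> n <= #|S|).

From mathcomp Require Import all_boot zify.
Set Implicit Arguments. Unset Strict Implicit. Unset Printing Implicit Defensive.

(* Lower bound: in a PDA(F, F, 2) the other occurrences of a symbol lie in distinct
   rows and each empties a cell of the column of the first, so a symbol occurs at most
   three times; counting the F (F - 2) filled cells gives 6 |S| >= 3 F (F - 2) + 3 t1 - t3,
   where t1 and t3 count the cells whose symbol occurs once, resp. three times. Both
   empty cells of a column through a triple cell lie in rows of the other occurrences;
   double counting these holes row by row shows t3 <= t1 + F, whence 6 |S| >= 3 F^2 - 7 F.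
   Upper bound: an array whose column k is empty exactly at rows k and p k, for a
   derangement p, extends from F to F + 3 with 3 F + 1 new symbols; starting from
   F = 0, 2, 4 this attains ceil (F (3 F - 7) / 6) for all F <> 1, and the recursion is
   the difference of this closed form at F and F - 3. *)

Lemma card_set_sum (T : finType) (P : pred T) : #|[set x | P x]| = \sum_x P x.
Proof. by rewrite -sum1dep_card big_mkcond; apply: eq_bigr => x _; case: (P x). Qed.

Lemma card_set_pair (T U : finType) (Q : T -> U -> bool) :
  #|[set x : T * U | Q x.1 x.2]| = \sum_t #|[set u | Q t u]|.
Proof.
rewrite card_set_sum; under [RHS]eq_bigr => t _ do rewrite card_set_sum.
by rewrite pair_bigA.
Qed.

Lemma card_set_pair_r (T U : finType) (Q : T -> U -> bool) :
  #|[set x : T * U | Q x.1 x.2]| = \sum_u #|[set t | Q t u]|.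
Proof.
rewrite card_set_pair; under eq_bigr => t _ do rewrite card_set_sum.
by rewrite exchange_big; apply: eq_bigr => u _; rewrite card_set_sum.
Qed.

Lemma card_set_distinct_pairs (T : finType) (A : {set T}) :
  #|[set x : T * T | [&& x.1 \in A, x.2 \in A & x.1 != x.2]]| = #|A| * #|A|.-1.
Proof.
rewrite (card_set_pair (fun a b => [&& a \in A, b \in A & a != b])).
rewrite (bigID (mem A)) /= [X in _ + X]big1 => [|a /negbTE aA]; last first.
  by apply: eq_card0 => b; rewrite inE aA.
rewrite addn0 -sum_nat_const; apply: eq_bigr => a aA.
have -> : [set b | [&& a \in A, b \in A & a != b]] = A :\ a.
  by apply/setP => b; rewrite !inE aA /= andbC eq_sym.
by rewrite (cardsD1 a A) aA.
Qed.

Lemma card2_memP (T : finType) (A : {set T}) a b x :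
  #|A| = 2 -> a \in A -> b \in A -> a != b -> x \in A -> x = a \/ x = b.
Proof.
move=> A2 aA bA ab; suff <- : [set a; b] = A by move/set2P.
by apply/eqP; rewrite eqEcard subUset !sub1set aA bA cards2 ab A2.
Qed.

(** * Lower bound *)

Section SquarePDALowerBound.
Variables (F : nat) (S : finType) (R : 'I_F -> 'I_F -> option S).
Hypothesis PDA_R : is_PDA 2 R.

Local Notation cell := ('I_F * 'I_F)%type.
Local Notation sym c := (R c.1 c.2).

Definition occ (t : S) := [set c : cell | sym c == Some t].
Definition mult (c : cell) := if sym c is Some t then #|occ t| else 0.
Definition single_cells := [set c | mult c == 1].
Definition triple_cells := [set c | mult c == 3].
Definition triple_cols := [set k | [exists j, (j, k) \in triple_cells]].
Definition holes (v : 'I_F) := [set k in triple_cols | R v k == None].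
Definition hole_rows := [set v | holes v != set0].

Lemma in_holes v k : (k \in holes v) = (k \in triple_cols) && (R v k == None).
Proof. by rewrite inE. Qed.

Lemma card_col_holes k : #|[set j | R j k == None]| = 2.
Proof. by case: PDA_R. Qed.

Lemma card_col_filled k : #|[set j | R j k != None]| = F - 2.
Proof.
have := cardsC [set j | R j k == None]; rewrite card_ord card_col_holes.
suff -> : ~: [set j | R j k == None] = [set j | R j k != None] by lia.
by apply/setP => j; rewrite !inE.
Qed.

Lemma sym_cross c d t : sym c = Some t -> sym d = Some t -> c != d ->
  R c.1 d.2 = None /\ R d.1 c.2 = None.
Proof.
case: PDA_R => _ [_ [_ cross]] Ec Ed cd; apply: (cross _ _ _ _ t) => // E.
by move: cd; rewrite [c]surjective_pairing [d]surjective_pairing E eqxx.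
Qed.

Lemma sym_row_col_neq c d t : sym c = Some t -> sym d = Some t -> c != d ->
  c.1 != d.1 /\ c.2 != d.2.
Proof.
move=> Ec Ed cd; have [Ecd Edc] := sym_cross Ec Ed cd.
by split; apply: contra_eq_neq Ecd => E; rewrite ?E ?Ed -?E ?Ec.
Qed.

Lemma card_occ_le3 t : #|occ t| <= 3.
Proof.
have [->|[c ct]] := set_0Vmem (occ t); first by rewrite cards0.
have Ec : sym c = Some t by move: ct; rewrite inE => /eqP.
rewrite (cardsD1 c) ct -(card_col_holes c.2) -(@card_in_imset _ _ fst (occ t :\ c)).
  apply: subset_leq_card; apply/subsetP => _ /imsetP [d + ->].
  rewrite !inE => /andP [dc /eqP Ed].
  by rewrite eq_sym in dc; have [_ ->] := sym_cross Ec Ed dc.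
move=> d1 d2; rewrite !inE => /andP [_ /eqP E1] /andP [_ /eqP E2] E.
by apply/eqP; apply: contraT => d12; have [] := sym_row_col_neq E1 E2 d12; rewrite E eqxx.
Qed.

Lemma sum_filled_mult (g : nat -> nat) :
  \sum_(c | sym c != None) g (mult c) = \sum_t #|occ t| * g #|occ t|.
Proof.
transitivity (\sum_t \sum_(c in occ t) g (mult c)); last first.
  apply: eq_bigr => t _; rewrite -sum_nat_const; apply: eq_bigr => c.
  by rewrite inE /mult => /eqP ->.
rewrite [RHS](exchange_big_dep (fun c => sym c != None)) => [|t c _]; last first.
  by rewrite inE => /eqP ->.
apply: eq_bigr => c; case E: (sym c) => [t|] // _.
rewrite (big_pred1 t) // => u; rewrite inE E.
by apply/eqP/eqP => [[]|->].
Qed.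

Lemma card_filled : \sum_(c | sym c != None) 1 = F * (F - 2).
Proof.
rewrite sum1dep_card (card_set_pair_r (fun j k => R j k != None)).
by under eq_bigr => k _ do rewrite card_col_filled; rewrite sum_nat_const card_ord.
Qed.

Lemma card_mult_cells m : 0 < m ->
  #|[set c | mult c == m]| = \sum_(c | sym c != None) (mult c == m).
Proof.
move=> m_gt0; rewrite card_set_sum [RHS]big_mkcond; apply: eq_bigr => c _.
by rewrite /mult; case: (sym c) => //; rewrite eq_sym gtn_eqF.
Qed.

(* A symbol with m <= 3 occurrences satisfies m (3 + 3 [m = 1]) <= 6 + m [m = 3]. *)
Lemma count_filled_cells :
  3 * (F * (F - 2)) + 3 * #|single_cells| <= 6 * #|S| + #|triple_cells|.
Proof.
rewrite /single_cells /triple_cells !card_mult_cells // -card_filled.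
rewrite !big_distrr -big_split /= (sum_filled_mult (fun m => 3 * 1 + 3 * (m == 1))).
rewrite (sum_filled_mult (fun m => m == 3 : nat)) -sum1_card big_distrr -big_split /=.
apply: leq_sum => t _.
by have := card_occ_le3 t; case: #|occ t| => [|[|[|[|]]]].
Qed.

Lemma triple_cellsP c :
  reflect (exists2 t, sym c = Some t & #|occ t| = 3) (c \in triple_cells).
Proof.
rewrite inE /mult; case: (sym c) => [t|]; last by right => [[]].
by apply: (iffP eqP) => [|[u [<-]]]; first exists t.
Qed.

Lemma triple_cells_sym c d : c \in triple_cells -> sym d = sym c -> d \in triple_cells.
Proof. by rewrite !inE /mult => + ->. Qed.

Lemma triple_cols_col c : c \in triple_cells -> c.2 \in triple_cols.
Proof. by move=> cT; rewrite inE; apply/existsP; exists c.1; rewrite -surjective_pairing. Qed.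

Lemma card_triple_others c : c \in triple_cells ->
  #|[set d | (sym d == sym c) && (d != c)]| = 2.
Proof.
case/triple_cellsP => t Ec occ3.
have := cardsD1 c (occ t); rewrite occ3 inE Ec eqxx add1n => -[->].
by apply: eq_card => d; rewrite !inE andbC.
Qed.

Lemma triple_other c : c \in triple_cells -> exists d, sym d = sym c /\ d != c.
Proof.
move/card_triple_others => occ2.
have /card_gt0P [d] : 0 < #|[set d | (sym d == sym c) && (d != c)]| by rewrite occ2.
by rewrite inE => /andP [/eqP ? ?]; exists d.
Qed.

Lemma triple_third c d : c \in triple_cells -> sym d = sym c -> d != c ->
  exists e, [/\ sym e = sym c, e != c & e != d].
Proof.
move=> /card_triple_others occ2 Ed dc.
have /card_gt1P [e1 [e2 []]] : 1 < #|[set d | (sym d == sym c) && (d != c)]| by rewrite occ2.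
rewrite !inE => /andP [/eqP E1 e1c] /andP [/eqP E2 e2c] e12.
have [e1d|] := eqVneq e1 d; last by exists e1.
by exists e2; split=> //; rewrite -e1d eq_sym.
Qed.

Lemma triple_col_hole c j : c \in triple_cells -> R j c.2 = None ->
  exists2 d, sym d = sym c /\ d != c & d.1 = j.
Proof.
move=> cT Rj; have /triple_cellsP [t Ec _] := cT.
have [d [Ed dc]] := triple_other cT; have [e [Ee ec ed]] := triple_third cT Ed dc.
rewrite Ec in Ed Ee; rewrite eq_sym in dc; rewrite eq_sym in ec.
have [_ Rd] := sym_cross Ec Ed dc; have [_ Re] := sym_cross Ec Ee ec.
have [ed1 _] := sym_row_col_neq Ee Ed ed.
have hole x : R x c.2 = None -> x \in [set j | R j c.2 == None] by rewrite inE => ->.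
have [->|->] := card2_memP (card_col_holes c.2) (hole _ Re) (hole _ Rd) ed1 (hole _ Rj).
- by exists e; rewrite // Ee Ec eq_sym.
- by exists d; rewrite // Ed Ec eq_sym.
Qed.

Lemma holes_card_gt1 v k : k \in holes v -> 1 < #|holes v|.
Proof.
rewrite in_holes => /andP [+ /eqP Rvk]; rewrite inE => /existsP [j cT].
have /triple_cellsP [t Ec _] := cT.
have [d [Ed dc] dv] := triple_col_hole cT Rvk.
have [e [Ee ec ed]] := triple_third cT Ed dc.
have eT := triple_cells_sym cT Ee.
rewrite Ec in Ed Ee; rewrite eq_sym in ed; rewrite eq_sym in ec.
have [Rde _] := sym_cross Ed Ee ed; have [_ ke] := sym_row_col_neq Ec Ee ec.
apply/card_gt1P; exists k, e.2; split => //.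
- by rewrite in_holes Rvk eqxx andbT; apply: (triple_cols_col cT).
- by rewrite in_holes -dv Rde eqxx andbT triple_cols_col.
Qed.

Lemma triple_row_unique c d j : c \in triple_cells -> sym d = sym c -> d != c ->
  R j c.2 != None -> R j d.2 = None -> j = c.1.
Proof.
move=> cT Ed dc + Rjd.
have [e [Ee ed] <-] := triple_col_hole (triple_cells_sym cT Ed) Rjd.
have [-> //|ec] := eqVneq e c.
have /triple_cellsP [t Ec _] := cT; rewrite Ed Ec in Ee; rewrite eq_sym in ec.
by have [_ ->] := sym_cross Ec Ee ec.
Qed.

Lemma sum_card_holes : \sum_v #|holes v| = 2 * #|triple_cols|.
Proof.
rewrite -[LHS](card_set_pair (fun v k => (k \in triple_cols) && (R v k == None))).
rewrite (card_set_pair_r (fun v k => (k \in triple_cols) && (R v k == None))).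
rewrite mulnC -sum_nat_const (bigID (mem triple_cols)) /= addnC big1 => [|k /negbTE kT].
  by apply: eq_bigr => k kT; rewrite -(card_col_holes k); apply: eq_card => j; rewrite inE kT inE.
by apply: eq_card0 => j; rewrite inE kT.
Qed.

(* Map an ordered pair of occurrences of a triple symbol to their columns; both
   are holes of the row of the third occurrence. *)
Lemma card_triple_cells_le_holes : 2 * #|triple_cells| <= \sum_v #|holes v| * #|holes v|.-1.
Proof.
pose P := [set cd : cell * cell | [&& cd.1 \in triple_cells, sym cd.2 == sym cd.1 & cd.2 != cd.1]].
pose D := [set vk : 'I_F * ('I_F * 'I_F) |
  [&& vk.2.1 \in holes vk.1, vk.2.2 \in holes vk.1 & vk.2.1 != vk.2.2]].
pose cols (cd : cell * cell) := (cd.1.2, cd.2.2).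
have cardP : #|P| = 2 * #|triple_cells|.
  rewrite (card_set_pair (fun c d => [&& c \in triple_cells, sym d == sym c & d != c])).
  rewrite mulnC -sum_nat_const (bigID (mem triple_cells)) /= addnC big1 => [|c /negbTE cT].
    apply: eq_bigr => c cT; rewrite -(card_triple_others cT).
    by apply: eq_card => d; rewrite inE cT inE.
  by apply: eq_card0 => d; rewrite inE cT.
have cardD : #|D| = \sum_v #|holes v| * #|holes v|.-1.
  rewrite (card_set_pair (fun v kk => [&& kk.1 \in holes v, kk.2 \in holes v & kk.1 != kk.2])).
  by apply: eq_bigr => v _; rewrite card_set_distinct_pairs.
have cols_inj : {in P &, injective cols}.
  move=> [c1 c2] [d1 d2] /[1!inE] /and3P [c1T /eqP E12 c21].
  move=> /[1!inE] /and3P [d1T /eqP F12 d21] [E1 E2].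
  move: E12 F12 c21 d21 E1 E2 c1T d1T => /= E12 F12 c21 d21 E1 E2 c1T d1T.
  have c2T := triple_cells_sym c1T E12.
  have /triple_cellsP [u Ed1 _] := d1T; rewrite Ed1 in F12.
  have [Rd12 Rd21] := sym_cross Ed1 F12 (ltac:(by rewrite eq_sym) : d1 != d2).
  have r1 : d1.1 = c1.1.
    by apply: (triple_row_unique c1T E12 c21); rewrite ?E1 ?E2 ?Ed1.
  have r2 : d2.1 = c2.1.
    apply: (triple_row_unique c2T (esym E12)); rewrite ?E1 ?E2 ?F12 //.
    by rewrite eq_sym.
  by move: r1 r2 E1 E2; clear; case: c1 c2 d1 d2 => [? ?] [? ?] [? ?] [? ?] /= -> -> -> ->.
have cols_sub : cols @: P \subset snd @: D.
  apply/subsetP => _ /imsetP [[c1 c2] /[1!inE] /and3P [c1T /eqP E12 c21] ->].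
  move: E12 c21 c1T => /= E12 c21 c1T.
  have [e [Ee ec1 ec2]] := triple_third c1T E12 c21.
  have /triple_cellsP [t Ec1 _] := c1T; rewrite Ec1 in E12 Ee.
  have [_ Re1] := sym_cross Ec1 Ee (ltac:(by rewrite eq_sym) : c1 != e).
  have [_ Re2] := sym_cross E12 Ee (ltac:(by rewrite eq_sym) : c2 != e).
  have [_ c12] := sym_row_col_neq Ec1 E12 (ltac:(by rewrite eq_sym) : c1 != c2).
  apply/imsetP; exists (e.1, (c1.2, c2.2)) => //.
  rewrite inE /= !in_holes Re1 Re2 c12 !eqxx !andbT !triple_cols_col //.
  exact: triple_cells_sym c1T (etrans E12 (esym Ec1)).
rewrite -cardP -cardD -(card_in_imset cols_inj).
exact: leq_trans (subset_leq_card cols_sub) (leq_imset_card _ _).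
Qed.

Lemma sum_card_holes_sq_le :
  \sum_v #|holes v| * #|holes v|.-1 + 2 * F * #|hole_rows| <= (F + 1) * \sum_v #|holes v|.
Proof.
rewrite card_set_sum !big_distrr -big_split /=.
apply: leq_sum => v _; rewrite -card_gt0.
have := max_card (holes v); rewrite card_ord.
have : #|holes v| != 1.
  apply/negP => /eqP h1; have /card_gt0P [k /holes_card_gt1] : 0 < #|holes v| by rewrite h1.
  by rewrite h1.
(* a row's hole count h is 0 or lies in [2, F], where (h - 2) (h - F) <= 0 *)
case: #|holes v| => [|[|h]] //= _ hF; nia.
Qed.

Lemma card_triple_cells_le_cols :
  #|triple_cells| + F * #|hole_rows| <= (F + 1) * #|triple_cols|.
Proof.
have := leq_add card_triple_cells_le_holes (leqnn (2 * F * #|hole_rows|)).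
move/leq_trans/(_ sum_card_holes_sq_le); rewrite sum_card_holes; lia.
Qed.

Lemma in_hole_rows v k : k \in holes v -> v \in hole_rows.
Proof. by move=> kv; rewrite inE; apply/set0Pn; exists k. Qed.

Definition filled_triple_cols := [set c : cell | (c.2 \in triple_cols) && (sym c != None)].
Definition filled_hole_rows := [set c : cell | (c.1 \in hole_rows) && (sym c != None)].

Lemma card_filled_triple_cols : #|filled_triple_cols| = #|triple_cols| * (F - 2).
Proof.
rewrite (card_set_pair_r (fun j k => (k \in triple_cols) && (R j k != None))).
rewrite -sum_nat_const (bigID (mem triple_cols)) /= addnC big1 => [|k /negbTE kT].
  by apply: eq_bigr => k kT; rewrite -(card_col_filled k); apply: eq_card => j; rewrite inE kT inE.
by apply: eq_card0 => j; rewrite inE kT.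
Qed.

Lemma card_filled_hole_rows : #|filled_hole_rows| + 2 * #|triple_cols| <= F * #|hole_rows|.
Proof.
rewrite (card_set_pair (fun v k => (v \in hole_rows) && (R v k != None))) -sum_card_holes.
rewrite -big_split /= mulnC -sum_nat_const [X in _ <= X]big_mkcond /=; apply: leq_sum => v _.
case: ifP => vW; last first.
  have -> : holes v = set0 by apply/eqP; move: vW; rewrite inE => /negbFE.
  by rewrite cards0 addn0.
rewrite -[leqRHS](card_ord F) -(cardsC [set k | R v k == None]) addnC.
apply: leq_add.
  by apply: subset_leq_card; apply/subsetP => k; rewrite in_holes inE => /andP [].
by apply: eq_leq; apply: eq_card => k; rewrite !inE.
Qed.

Definition partner (c : cell) := odflt c [pick d | (sym d == sym c) && (d != c)].

Lemma partnerP c : sym c != None -> c \notin single_cells ->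
  sym (partner c) = sym c /\ partner c != c.
Proof.
case Ec: (sym c) => [t|] // _; rewrite inE /mult Ec => occ_ne1.
have /card_gt1P [x [y [xt yt xy]]] : 1 < #|occ t|.
  by rewrite ltn_neqAle eq_sym occ_ne1 card_gt0; apply/set0Pn; exists c; rewrite inE Ec.
have [d dt dc] : exists2 d, d \in occ t & d != c.
  by have [xc|] := eqVneq x c; [exists y; rewrite // -xc eq_sym | exists x].
rewrite /partner; case: pickP => [d' /andP [/eqP -> ->] //| none].
move: dt; rewrite inE => /eqP Ed.
by have := none d; rewrite /= dc andbT Ed Ec eqxx.
Qed.

Lemma partner_hole_row c : c \in filled_triple_cols -> c.1 \notin hole_rows ->
  c \notin single_cells -> (partner c).1 \in hole_rows /\ (partner c).2 \notin triple_cols.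
Proof.
rewrite inE => /andP [cT cN] cW cS.
have [Ed dc] := partnerP cN cS; move: (partner c) Ed dc => d Ed dc.
move: cN Ed; case Ec: (sym c) => [t|] // _ Ed; rewrite eq_sym in dc.
have [Rcd Rdc] := sym_cross Ec Ed dc.
split; first by apply: (@in_hole_rows _ c.2); rewrite in_holes cT Rdc.
by apply: contra cW => dT; apply: (@in_hole_rows _ d.2); rewrite in_holes dT Rcd.
Qed.

(* Keep the cells in hole rows or of multiplicity 1 and send every other cell to
   its partner, which lies in a hole row outside the triple columns; the partners
   of two distinct cells differ, as their crossing cell would make a hole row. *)
Lemma card_filled_triple_cols_le : #|filled_triple_cols| <= #|filled_hole_rows| + #|single_cells|.
Proof.
pose kept c := (c.1 \in hole_rows) || (c \in single_cells).
pose g c := if kept c then c else partner c.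
have moved c : c \in filled_triple_cols -> ~~ kept c ->
    [/\ sym (g c) = sym c, (g c).1 \in hole_rows & (g c).2 \notin triple_cols].
  move=> cX nk; rewrite /g (negbTE nk); move: nk; rewrite negb_or => /andP [cW cS].
  have cN : sym c != None by move: cX; rewrite inE => /andP [].
  have [Ed _] := partnerP cN cS.
  by have [] := partner_hole_row cX cW cS.
have g_inj : {in filled_triple_cols &, injective g}.
  move=> c1 c2 c1X c2X.
  have [k1|k1] := boolP (kept c1); have [k2|k2] := boolP (kept c2).
  - by rewrite /g k1 k2.
  - have [_ _ g2T] := moved c2 c2X k2; rewrite {1}/g k1 => E.
    by move: c1X; rewrite inE E (negbTE g2T).
  - have [_ _ g1T] := moved c1 c1X k1; rewrite {2}/g k2 => E.
    by move: c2X; rewrite inE -E (negbTE g1T).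
  - have [E1 _ _] := moved c1 c1X k1; have [E2 _ _] := moved c2 c2X k2.
    move=> E; apply/eqP; apply: contraT => c12.
    move: c1X (c1X); rewrite inE => /andP [c1T]; case Ec1: (sym c1) => [t|] // _ c1X.
    have Ec2 : sym c2 = Some t by rewrite -E2 -E E1.
    have [_ R21] := sym_cross Ec1 Ec2 c12.
    by move: k2; rewrite negb_or (@in_hole_rows _ c1.2) // in_holes c1T R21.
rewrite -(card_in_imset g_inj) -cardsUI; apply: leq_trans (leq_addr _ _).
apply: subset_leq_card; apply/subsetP => _ /imsetP [c cX ->].
move: (cX); rewrite inE => /andP [_ cN].
have [k|k] := boolP (kept c); last first.
  by have [Eg gW _] := moved c cX k; rewrite inE inE gW Eg cN.
by rewrite /g k inE [c \in filled_hole_rows]inE cN andbT.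
Qed.

Hypothesis F_ge2 : 2 <= F.

Lemma card_triple_cols_le : F * #|triple_cols| <= F * #|hole_rows| + #|single_cells|.
Proof.
have := card_filled_triple_cols_le; have := card_filled_hole_rows.
rewrite card_filled_triple_cols; nia.
Qed.

Lemma card_triple_cells_le_single : #|triple_cells| <= #|single_cells| + F.
Proof.
have := card_triple_cells_le_cols; have := card_triple_cols_le.
have := max_card triple_cols; rewrite card_ord; nia.
Qed.

Theorem PDA_square2_card_lb : 3 * F ^ 2 <= 6 * #|S| + 7 * F.
Proof. have := count_filled_cells; have := card_triple_cells_le_single; nia. Qed.
End SquarePDALowerBound.

(** * Construction *)

(* A PDA(F, F, 2) with natural-number indices whose empty cells are the diagonal and
   the graph of a derangement [p]: the shape preserved by the construction below. *)
Definition deranged_PDA (F n : nat) (r : nat -> nat -> option nat) (p : nat -> nat) : Prop :=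
  [/\ forall k, k < F -> p k < F /\ p k <> k,
      forall k1 k2, k1 < F -> k2 < F -> p k1 = p k2 -> k1 = k2,
      forall j k, j < F -> k < F -> (r j k = None <-> j = k \/ j = p k),
      forall j k t, j < F -> k < F -> r j k = Some t -> t < n &
      forall j1 k1 j2 k2 t, j1 < F -> k1 < F -> j2 < F -> k2 < F ->
        (j1 <> j2 \/ k1 <> k2) -> r j1 k1 = Some t -> r j2 k2 = Some t ->
        r j1 k2 = None /\ r j2 k1 = None].

Lemma PDA_exists_deranged F n r p : deranged_PDA F n r p -> PDA_exists F F 2 'I_n.
Proof.
case=> p_lt p_inj r_None r_lt r_cross.
pose R (j k : 'I_F) : option 'I_n := obind insub (r j k).
have R_None j k : R j k = None <-> r j k = None.
  rewrite /R; case E: (r j k) => [t|] //=; split=> //.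
  by rewrite insubT //; apply: r_lt E.
have R_Some j k t : R j k = Some t <-> r j k = Some (val t).
  rewrite /R; case: (r j k) => [u|] //=; split; last by case=> ->; rewrite valK.
  by case: insubP => // v _ <- [->].
have R_cross (j1 j2 k1 k2 : 'I_F) t : (j1, k1) <> (j2, k2) ->
    R j1 k1 = Some t -> R j2 k2 = Some t -> R j1 k2 = None /\ R j2 k1 = None.
  move=> jk12 /R_Some E1 /R_Some E2; rewrite !R_None.
  apply: (r_cross _ _ _ _ _ (ltn_ord j1) (ltn_ord k1) (ltn_ord j2) (ltn_ord k2) _ E1 E2).
  case: (eqVneq j1 j2) => [j12|j12]; last by left => /ord_inj/eqP; rewrite (negbTE j12).
  by right => /ord_inj k12; apply: jk12; rewrite j12 k12.
exists R; split; [|split; [|split]] => //.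
- move=> k; have [pk_lt pk_neq] := p_lt k (ltn_ord k).
  have -> : [set j | R j k == None] = [set k; Ordinal pk_lt].
    apply/setP => j; rewrite inE; apply/eqP/set2P.
    + by move/R_None/(r_None _ _ (ltn_ord j) (ltn_ord k)) => [] ?; [left | right]; apply: ord_inj.
    + by move=> jk; apply/R_None/(r_None _ _ (ltn_ord j) (ltn_ord k)); case: jk => ->; [left|right].
  by rewrite cards2; case: eqP => // /(congr1 val) /= /esym.
- move=> j k1 k2 t E1 E2; apply/eqP; apply: contraT => /eqP k12.
  by have [] := R_cross j j k1 k2 t (fun E => k12 (congr1 snd E)) E1 E2; rewrite E2.
- move=> j1 j2 k t E1 E2; apply/eqP; apply: contraT => /eqP j12.
  by have [] := R_cross j1 j2 k k t (fun E => j12 (congr1 fst E)) E1 E2; rewrite E1.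
Qed.

Section Extend3.
Variables (F n : nat) (r : nat -> nat -> option nat) (p : nat -> nat).
Hypothesis rp : deranged_PDA F n r p.

(* Rows and columns [F + a], [a < 3], are added; the symbols [n.+1 + 3 * q + i]
   fill the new columns of the old rows and are repeated once in the new rows,
   while [n] fills three cells of the new 3 x 3 corner. *)
Definition extend3 (j k : nat) : option nat :=
  if j < F then
    if k < F then r j k else Some (n.+1 + 3 * j + (k - F))
  else if k < F then Some (n.+1 + 3 * (if j - F < 2 then k else p k) + (j - F + 2) %% 3)
  else if j - F == (k - F + 2) %% 3 then Some n else None.

Definition extend3_perm (k : nat) : nat := if k < F then p k else F + (k - F).+1 %% 3.

Lemma extend3_old_sym j k t : extend3 j k = Some t -> t < n -> j < F /\ k < F.
Proof.
rewrite /extend3; case: (ltnP j F) => jF; case: (ltnP k F) => kF //; try by case=> <-; lia.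
by case: ifP => // _ [<-]; lia.
Qed.

Lemma extend3_corner j k : extend3 j k = Some n ->
  [/\ F <= j, F <= k & j - F = (k - F + 2) %% 3].
Proof.
case: rp => _ _ _ r_lt _; rewrite /extend3; case: (ltnP j F) => jF; case: (ltnP k F) => kF.
- by move/(r_lt _ _ _ jF kF); rewrite ltnn.
- by case; lia.
- by case; lia.
- by case: eqP.
Qed.

Lemma extend3_new_sym j k t : extend3 j k = Some t -> n < t ->
  [/\ j < F, F <= k & t = n.+1 + 3 * j + (k - F)] \/
  (F <= j /\ k < F /\ t = n.+1 + 3 * (if j - F < 2 then k else p k) + (j - F + 2) %% 3).
Proof.
case: rp => _ _ _ r_lt _; rewrite /extend3; case: (ltnP j F) => jF; case: (ltnP k F) => kF.
- by move/(r_lt _ _ _ jF kF); lia.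
- by case=> <-; left; split.
- by case=> <-; right.
- by case: ifP => // _ [<-]; rewrite ltnn.
Qed.

Lemma extend3_new_sym_inj j1 k1 j2 k2 t : j1 < F + 3 -> k1 < F + 3 -> j2 < F + 3 -> k2 < F + 3 ->
  n < t -> extend3 j1 k1 = Some t -> extend3 j2 k2 = Some t -> (j1 < F) = (j2 < F) ->
  j1 = j2 /\ k1 = k2.
Proof.
case: rp => _ p_inj _ _ _ j1_lt k1_lt j2_lt k2_lt nt E1 E2.
have := extend3_new_sym E1 nt; have := extend3_new_sym E2 nt.
case=> [[j2F k2F ->]|[j2F [k2F ->]]] [[j1F k1F]|[j1F [k1F]]].
all: rewrite ?j1F ?j2F ?ltnNge ?j1F ?j2F //.
- by lia.
- set q1 := if _ then _ else _; set q2 := if _ then _ else _ => E _.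
  have [j12 q12] : j1 = j2 /\ q1 = q2 by lia.
  move: q12; rewrite /q1 /q2 -j12; case: ifP => _ //.
  by split => //; apply: p_inj.
Qed.

Lemma extend3_new_sym_cross j1 k1 j2 k2 t : j2 < F + 3 -> k1 < F + 3 -> j1 < F -> F <= j2 ->
  n < t -> extend3 j1 k1 = Some t -> extend3 j2 k2 = Some t ->
  extend3 j1 k2 = None /\ extend3 j2 k1 = None.
Proof.
case: rp => _ _ r_None _ _ j2_lt k1_lt j1F j2F nt E1 E2.
have := extend3_new_sym E1 nt; have := extend3_new_sym E2 nt.
case=> [[? _ _]|[_ [k2F ->]]]; first lia.
case=> [[_ k1F E]|[? _]]; last lia.
have {}E : j1 = (if j2 - F < 2 then k2 else p k2) /\ k1 - F = (j2 - F + 2) %% 3 by lia.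
rewrite /extend3 j1F k2F ltnNge j2F ltnNge k1F /=; split.
- by apply/r_None => //; case: ifP E => _ [-> _]; [left | right].
- by case: eqP => //; lia.
Qed.

Lemma extend3_cross j1 k1 j2 k2 t : j1 < F + 3 -> k1 < F + 3 -> j2 < F + 3 -> k2 < F + 3 ->
  (j1 <> j2 \/ k1 <> k2) -> extend3 j1 k1 = Some t -> extend3 j2 k2 = Some t ->
  extend3 j1 k2 = None /\ extend3 j2 k1 = None.
Proof.
case: rp => _ _ _ _ r_cross j1_lt k1_lt j2_lt k2_lt jk12 E1 E2.
case: (ltngtP t n) => [tn|nt|tn]; last rewrite {}tn in E1 E2.
- have [j1F k1F] := extend3_old_sym E1 tn; have [j2F k2F] := extend3_old_sym E2 tn.
  move: E1 E2; rewrite /extend3 j1F j2F k1F k2F; exact: r_cross.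
- have [j1F|j1F] := ltnP j1 F; have [j2F|j2F] := ltnP j2 F.
  + by have [] := extend3_new_sym_inj j1_lt k1_lt j2_lt k2_lt nt E1 E2; [rewrite j1F j2F | lia].
  + exact: extend3_new_sym_cross E1 E2.
  + by apply/and_comm; apply: extend3_new_sym_cross E2 E1.
  + have [] := extend3_new_sym_inj j1_lt k1_lt j2_lt k2_lt nt E1 E2; last lia.
    by rewrite !ltnNge j1F j2F.
- have [j1F k1F jk1] := extend3_corner E1; have [j2F k2F jk2] := extend3_corner E2.
  rewrite /extend3 !ltnNge j1F j2F k1F k2F /=.
  by split; case: eqP => //; lia.
Qed.

Lemma deranged_PDA_extend3 :
  deranged_PDA (F + 3) (n + 3 * F + 1) extend3 extend3_perm.
Proof.
case: (rp) => p_lt p_inj r_None r_lt _; split.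
- move=> k k_lt; rewrite /extend3_perm; case: (ltnP k F) => kF; last lia.
  by have [] := p_lt k kF; lia.
- move=> k1 k2 k1_lt k2_lt; rewrite /extend3_perm.
  case: (ltnP k1 F) => k1F; case: (ltnP k2 F) => k2F; [exact: p_inj | | | lia].
  + by have [] := p_lt k1 k1F; lia.
  + by have [] := p_lt k2 k2F; lia.
- move=> j k j_lt k_lt; rewrite /extend3 /extend3_perm.
  case: (ltnP j F) => jF; case: (ltnP k F) => kF; first exact: r_None.
  + by split=> // -[]; lia.
  + by have [] := p_lt k kF; split=> // -[]; lia.
  + case: eqP => E; first by split=> // -[]; lia.
    by split=> // _; lia.
- move=> j k t j_lt k_lt E.
  case: (ltnP n t) => [nt|]; last lia.
  case: (extend3_new_sym E nt) => [[jF _ ->]|[_ [kF ->]]]; first lia.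
  by case: ifP => _; [|have [] := p_lt k kF]; lia.
- exact: extend3_cross.
Qed.
End Extend3.

Lemma deranged_PDA_0 : deranged_PDA 0 0 (fun _ _ => None) id.
Proof. by split. Qed.

Lemma deranged_PDA_2 : deranged_PDA 2 0 (fun _ _ => None) (fun k => 1 - k).
Proof. by split=> // [k|k1 k2|j k] *; [lia | lia | split=> // _; lia]. Qed.

(* Each symbol [2 * a + b] sits at the two transposed cells [(a, 2 + b)] and [(2 + b, a)]. *)
Definition square4 (j k : nat) : option nat :=
  if (j < 2) == (k < 2) then None else Some (2 * minn j k + (maxn j k - 2)).

Lemma deranged_PDA_4 : deranged_PDA 4 4 square4 (fun k => if k < 2 then 1 - k else 5 - k).
Proof.
have lt4 a : a < 4 -> [\/ a = 0, a = 1, a = 2 | a = 3].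
  move=> a4; have : a = 0 \/ a = 1 \/ a = 2 \/ a = 3 by lia.
  by case=> [|[|[]]]; [constructor 1 | constructor 2 | constructor 3 | constructor 4].
split.
- by move=> k /lt4 [] ->.
- by move=> k1 k2 /lt4 [] -> /lt4 [] ->.
- by move=> j k /lt4 [] -> /lt4 [] ->; split=> //; first [by left | by right | by case].
- by move=> j k t /lt4 [] -> /lt4 [] -> //= [<-].
- move=> j1 k1 j2 k2 t /lt4 [] -> /lt4 [] -> /lt4 [] -> /lt4 [] -> //= jk [<-] //.
  all: by move=> /(congr1 (odflt 0)) /=; lia.
Qed.

(* [s_square2 F = ceil (F * (3 * F - 7) / 6)]; the subtraction never truncates. *)
Definition s_square2 (F : nat) : nat := (3 * F ^ 2 + 5 - 7 * F) %/ 6.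

Lemma s_square2_add3 F : s_square2 (F + 3) = s_square2 F + 3 * F + 1.
Proof. rewrite /s_square2; nia. Qed.

Lemma deranged_PDA_s_square2 F : F != 1 ->
  exists r p, deranged_PDA F (s_square2 F) r p.
Proof.
elim/ltn_ind: F => F IH F1.
have [F_small|F3] := ltnP F 3.
  have [->|->] : F = 0 \/ F = 2 by lia.
  - by exists (fun _ _ => None), id; exact: deranged_PDA_0.
  - by exists (fun _ _ => None), (fun k => 1 - k); exact: deranged_PDA_2.
have [->|F4] := eqVneq F 4.
  by exists square4, (fun k => if k < 2 then 1 - k else 5 - k); exact: deranged_PDA_4.
have [r [p rp]] := IH (F - 3) ltac:(lia) ltac:(lia).
rewrite -(subnK F3) s_square2_add3.
exists (extend3 (F - 3) (s_square2 (F - 3)) r p), (extend3_perm (F - 3) p).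
exact: deranged_PDA_extend3.
Qed.

Lemma is_s_square2 F : 2 <= F -> is_s F F 2 (s_square2 F).
Proof.
move=> F2; split.
  have [r [p rp]] := deranged_PDA_s_square2 (ltac:(lia) : F != 1).
  by exists 'I_(s_square2 F); rewrite card_ord; split=> //; exact: PDA_exists_deranged rp.
by move=> S [R PDA_R]; have := PDA_square2_card_lb PDA_R F2; rewrite /s_square2; lia.
Qed.

Theorem mainTheorem19 (F : nat) (hF : 6 <= F) :
  exists a b : nat,
    is_s F F 2 a /\ is_s (F - 3) (F - 3) 2 b /\ a = 3 * F - 8 + b.
Proof.
exists (s_square2 F), (s_square2 (F - 3)); split; [|split].
- by apply: is_s_square2; lia.
- by apply: is_s_square2; lia.
- by rewrite -{1}(subnK (_ : 3 <= F)) ?s_square2_add3; lia.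
Qed.
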